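(* Assume (H1)–(H9) with (H7) in the form (H7-WFL), all as described in the context. Then there exists an event $\Omega_1\subseteq\Omega$ of full probability such that for all $\omega\in\Omega_1$, $$\tilde A(\omega)=\overline A:=\max(\mu^\star_L,\mu^\star_R).$$
   Context: $(\Omega,\mathbf F,P)$ probability space; $H:\mathbb R\times\mathbb R\times\Omega\to\mathbb R$ measurable; for Borel $V$, $\mathbf F(V)$ is the $\sigma$-algebra generated by $\omega\mapsto H(p,y,\omega)$, $y\in V$, $p\in\mathbb R$. $(\tau_z)_{z\in\mathbb R}$ is an ergodic group of measure-preserving maps of $\Omega$ ($\tau_{x+z}=\tau_x\circ\tau_z$; invariant events have probability 0 or 1). (H1) $H$ Lipschitz in $p$ uniformly in $(y,\omega)$. (H2) $-c_0|p+\gamma|\le H\le C_0|p+\gamma|$ for some $c_0,C_0,\gamma>0$. (H3) $\lim_{|p|\to\infty}\inf_{(y,\omega)}H=+\infty$. (H4) $|H(p,y,\omega)-H(p,x,\omega)|\le w(|x-y|(1+|p|))$ for a modulus $w$. (H5) $H$ convex in $p$. (H6) $H(p,y,\omega)\ge H(0,y,\omega)$. (H7-WFL) $H(p,y,\omega)=\phi(y)H_L(p,y,\omega)+(1-\phi(y))H_R(p,y,\omega)$ with $\phi\in C^\infty$ non-increasing, $\phi=1$ on $(-\infty,-1]$, $\phi=0$ on $[1,\infty)$. (H8) $H_\alpha(p,y+z,\omega)=H_\alpha(p,y,\tau_z\omega)$ for $\alpha\in\{L,R\}$. (H9) $\mathbf F(U),\mathbf F(V)$ independent whenever $d(U,V)\ge1$.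 Definitions: $\tilde A(\omega)=\inf\{\mu:\ \exists v$ globally Lipschitz with $H(Dv,y,\omega)\le\mu$ in $\mathbb R\}$; $\mu^\star_\alpha$ is the almost surely constant value of $\inf\{\mu:\ \exists v$ globally Lipschitz with $H_\alpha(Dv,y,\omega)\le\mu$ in $\mathbb R\}$ (inequalities in the viscosity sense). *)

From HB Require Import structures.
From mathcomp Require Import all_boot all_order all_algebra.
From mathcomp Require Import all_classical all_reals all_analysis.
Set Implicit Arguments. Unset Strict Implicit. Unset Printing Implicit Defensive.
Import Order.TTheory GRing.Theory Num.Theory.
Import numFieldNormedType.Exports.
Local Open Scope classical_set_scope.
Local Open Scope ring_scope.

Section Defs.
Variable R : realType.

Definition glob_lipschitz (v : R -> R) : Prop :=
  exists L : R, forall x y, `|v x - v y| <= L * `|x - y|.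

Definition C1 (phi : R -> R) : Prop :=
  (forall x, derivable phi x 1) /\ continuous (derive1 phi).

Definition visc_subsol (F : R -> R -> R) (v : R -> R) (mu : R) : Prop :=
  continuous v /\
  forall (phi : R -> R) (y0 : R), C1 phi ->
    (\forall y \near y0, v y - phi y <= v y0 - phi y0) ->
    F (derive1 phi y0) y0 <= mu.

Definition effA (F : R -> R -> R) : \bar R :=
  ereal_inf [set (mu%:E) | mu in
    [set mu : R | exists v, glob_lipschitz v /\ visc_subsol F v mu]].

Definition modulus (w : R -> R) : Prop :=
  (forall r, 0 <= r -> 0 <= w r) /\
  (forall r s, 0 <= r -> r <= s -> w r <= w s) /\
  w 0 = 0 /\ (w r @[r --> 0^'+] --> 0).

Definition smooth (f : R -> R) : Prop :=
  forall n x, derivable (derive1n n f) x 1.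
End Defs.

Section Prob.
Context {d : measure_display} {Omega : measurableType d} {R : realType}.

Definition sigmaH (H : R -> R -> Omega -> R) (V : set R) : set (set Omega) :=
  <<s [set A | exists (p y : R) (B : set R),
          V y /\ measurable B /\ A = (fun w => H p y w) @^-1` B] >>.

Definition independent_sigma (P : probability Omega R)
    (F G : set (set Omega)) : Prop :=
  forall A B, F A -> G B -> P (A `&` B) = (P A * P B)%E.

Definition ergodic_group (P : probability Omega R) (tau : R -> Omega -> Omega)
  : Prop :=
  tau 0 = id /\
  (forall x z, tau (x + z) = tau x \o tau z) /\
  (forall z, measurable_fun setT (tau z)) /\
  (forall z A, measurable A -> P (tau z @^-1` A) = P A) /\
  (forall A, measurable A -> (forall z, tau z @` A = A) ->
     P A = 0%E \/ P A = 1%E).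
End Prob.

(* Under (H6) the infimum defining the effective constant is attained by the
   constant subsolution, and a steep parabola touching any Lipschitz
   subsolution from above near y forces mu >= H(0, y): hence
   A~(omega) = sup_y H(0, y, omega), and likewise for H_L and H_R.  As H is a
   convex combination of H_L and H_R, A~ <= max(A_L, A_R).  Conversely H = H_L
   on y <= -1 and H_L is stationary, so H_L(0, y, omega) = H(0, y - n, tau_n
   omega) for n large; the events {sup_{z <= -1} H(0, z) <= q} are mapped into
   themselves by tau_n^-1, hence are tau_n-invariant up to null sets since
   tau_n preserves P, which yields A_L <= A~ almost surely, and A_R <= A~ by the
   reflection y -> -y.  Only (H4), (H6), (H7), (H8) and the measure
   preservation of tau are used. *)

From HB Require Import structures.
From mathcomp Require Import all_boot all_order all_algebra.
From mathcomp Require Import all_classical all_reals all_analysis.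
From mathcomp Require Import lra.
Set Implicit Arguments.
Unset Strict Implicit.
Unset Printing Implicit Defensive.
Import Order.TTheory GRing.Theory Num.Theory.
Import numFieldNormedType.Exports.
Local Open Scope classical_set_scope.
Local Open Scope ring_scope.

Section effective_hamiltonian.
Variable R : realType.

Lemma C1_parabola (K y0 : R) : C1 (fun x => K * (x - y0) ^+ 2).
Proof.
have D (x : R) : is_derive x (1 : R) (fun x => K * (x - y0) ^+ 2) (K * ((x - y0) *+ 2)).
  apply: is_derive_eq.
  by rewrite /= subr0 [_ *: 1]mulr1 -mulr2n.
split=> [x|]; first by have [] := D x.
have -> : derive1 (fun x => K * (x - y0) ^+ 2) = fun x => K * ((x - y0) *+ 2).
  by apply/funext => x; rewrite derive1E derive_val.
by move=> x; apply: cvgM; [exact: cvg_cst | apply: cvgMn; apply: cvgB => //; exact: cvg_cst].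
Qed.

Lemma derive1_local_min (f : R -> R) (x : R) :
  (forall t, derivable f t 1) -> (\forall y \near x, f x <= f y) ->
  derive1 f x = 0.
Proof.
move=> df /nbhs_ballP[e /= e0 fmin].
have x_in : x \in `]x - e, x + e[ by rewrite in_itv /=; apply/andP; split; lra.
have fmin' t : t \in `]x - e, x + e[ -> f x <= f t.
  rewrite in_itv /= => /andP[t1 t2]; apply: fmin.
  by rewrite /ball /= ltr_norml; apply/andP; split; lra.
have le_e : x - e <= x + e by lra.
have := derive1_at_min le_e (fun t _ => df t) x_in fmin'.
by move=> D; rewrite derive1E derive_val.
Qed.

Lemma effA_le (F : R -> R -> R) (s : \bar R) :
  (forall y, ((F 0 y)%:E <= s)%E) -> (effA F <= s)%E.
Proof.
case: s => [r| |] Fs; last 2 first.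
- exact: leey.
- by have := Fs 0; rewrite leeNy_eq.
apply: ge_ereal_inf; exists r%:E => //; exists r => //.
exists (fun=> 0); split; first by exists 0 => x y; rewrite subrr normr0 mul0r.
split=> [x|phi y0 [dphi _] touch]; first exact: cst_continuous.
have -> : derive1 phi y0 = 0.
  apply: derive1_local_min => //.
  by apply: filterS touch => y; rewrite !sub0r lerN2.
by have := Fs y0; rewrite lee_fin.
Qed.

Lemma exists_local_max_sub_parabola (v : R -> R) (L K y0 r : R) :
  continuous v -> (forall x y, `|v x - v y| <= L * `|x - y|) ->
  0 < r -> L < K * r ->
  exists2 c, `|c - y0| < r &
    \forall y \near c, v y - K * (y - y0) ^+ 2 <= v c - K * (c - y0) ^+ 2.
Proof.
move=> cv vL r0 LKr; set g := fun y => v y - K * (y - y0) ^+ 2.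
have cg : continuous g.
  have [dp _] := C1_parabola K y0.
  move=> x; apply: cvgB; first exact: cv.
  by have /derivable1_diffP/differentiable_continuous := dp x.
have [c c_in gmax] : exists2 c, c \in `[y0 - r, y0 + r] &
    forall t, t \in `[y0 - r, y0 + r] -> g t <= g c.
  by apply: EVT_max; [lra | exact: continuous_subspaceT].
have in_itv_norm t : (t \in `[y0 - r, y0 + r]) = (`|t - y0| <= r).
  by rewrite in_itv /= ler_norml; apply/idP/idP => /andP[? ?]; apply/andP; split; lra.
have edge t : `|t - y0| = r -> g t < g y0.
  move=> tr; rewrite /g subrr expr0n /= mulr0 subr0 -(real_normK (num_real _)) tr.
  have : v t - v y0 <= L * r by rewrite -tr; apply: le_trans (ler_norm _) (vL _ _).
  by rewrite expr2 mulrA; nra.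
have c_int : `|c - y0| < r.
  rewrite lt_neqAle -in_itv_norm c_in andbT; apply/eqP => cr.
  have := gmax y0; rewrite in_itv_norm subrr normr0 ltW // => /(_ isT).
  by have := edge c cr; lra.
exists c => //.
have : c \in `]y0 - r, y0 + r[.
  by move: c_int; rewrite ltr_norml in_itv /= => /andP[? ?]; apply/andP; split; lra.
move=> /near_in_itvoo; apply: filterS => y; rewrite in_itv /= => /andP[? ?].
by apply: gmax; rewrite in_itv /=; apply/andP; split; lra.
Qed.

Lemma le_effA (F : R -> R -> R) (y0 : R) :
  (forall p y, F 0 y <= F p y) -> continuous (F 0) -> ((F 0 y0)%:E <= effA F)%E.
Proof.
move=> F0_min cF; apply: le_ereal_inf_tmp => _ [mu [v [[L vL] [cv vsub]]] <-].
rewrite lee_fin; apply/ler_addgt0Pr => e e0.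
move/cvgrPdist_lt: (cF y0) => /(_ e e0) /nbhs_ballP[r /= r0 F0_near].
have steep : L < (`|L| + 1) / r * r by rewrite divfK ?gt_eqF //; have := ler_norm L; lra.
have [c cr touch] := exists_local_max_sub_parabola y0 cv vL r0 steep.
have F0c_le : F 0 c <= mu := le_trans (F0_min _ c) (vsub _ c (C1_parabola _ y0) touch).
have : `|F 0 y0 - F 0 c| < e by apply: F0_near; rewrite /ball /= distrC.
by rewrite ltr_norml => /andP[_]; lra.
Qed.

Lemma effA_sup (F : R -> R -> R) :
  (forall p y, F 0 y <= F p y) -> continuous (F 0) ->
  effA F = ereal_sup (range (fun y => (F 0 y)%:E)).
Proof.
move=> F0_min cF; apply/eqP; rewrite eq_le; apply/andP; split.
  by apply: effA_le => y; apply: ereal_sup_ubound; exists y.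
by apply: ge_ereal_sup => _ [y _ <-]; exact: le_effA.
Qed.

End effective_hamiltonian.

Section modulus.
Variable R : realType.

Definition has_modulus (w0 f : R -> R) := forall x y, `|f x - f y| <= w0 `|x - y|.

Lemma has_modulus_continuous (w0 f : R -> R) :
  modulus w0 -> has_modulus w0 f -> continuous f.
Proof.
move=> [_ [_ [w00 w0_lim]]] fw0 x; apply/cvgrPdist_lt => e e0.
move/cvgrPdist_lt: w0_lim => /(_ e e0)[d /= d0 w0_small].
apply/nbhs_ballP; exists d => // y; rewrite /ball /= => xy.
apply: le_lt_trans (fw0 x y) _.
have [->|xy_neq] := eqVneq `|x - y| 0; first by rewrite w00.
have := w0_small `|x - y|; rewrite /ball /= sub0r normrN normr_id => /(_ xy).
rewrite lt_neqAle eq_sym xy_neq normr_ge0 => /(_ isT).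
by rewrite sub0r normrN; apply: le_lt_trans (ler_norm _).
Qed.

Lemma has_modulus_opp (w0 f : R -> R) :
  has_modulus w0 f -> has_modulus w0 (fun z => f (- z)).
Proof. by move=> fw0 x y; have := fw0 (- x) (- y); rewrite -opprD normrN. Qed.

End modulus.

Section real_bounds.
Variable R : realType.

Lemma lee_rat_ub (x : R) (s : \bar R) :
  (forall q : rat, (s < (ratr q)%:E)%E -> x <= ratr q) -> (x%:E <= s)%E.
Proof.
case: s => [r| |] xq; last 2 first.
- exact: leey.
- have [q] := @rat_in_itvoo R (x - 1) x ltac:(lra).
  rewrite in_itv /= => /andP[_ qx]; exfalso.
  by have := xq q (ltNyr _); lra.
rewrite lee_fin leNgt; apply/negP => rx.
have [q] := rat_in_itvoo rx; rewrite in_itv /= => /andP[rq qx].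
by have := xq q; rewrite lte_fin rq => /(_ isT); rewrite leNgt qx.
Qed.

Lemma mix_le_max (t a b : R) : 0 <= t <= 1 -> t * a + (1 - t) * b <= Num.max a b.
Proof.
move=> /andP[t0 t1].
have [am bm] : a <= Num.max a b /\ b <= Num.max a b by rewrite !le_max !lexx orbT.
nra.
Qed.

End real_bounds.

Section almost_sure.
Context d (Omega : measurableType d) (R : realType).

Lemma measurable_forall_le (F : R -> Omega -> R) (q : R) :
  (forall z, measurable_fun setT (F z)) -> (forall w, continuous (F ^~ w)) ->
  measurable [set w | forall z, F z w <= q].
Proof.
move=> mF cF.
have -> : [set w | forall z, F z w <= q] = \bigcap_(r : rat) [set w | F (ratr r) w <= q].
  apply/seteqP; split=> w /= Fq; first by move=> r _; exact: Fq.
  move=> z; rewrite leNgt; apply/negP => qz.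
  have [x [/= + [r _ rx]]] := @dense_rat R [set z | q < F z w] (ex_intro _ z qz)
    (open_comp (fun z _ => cF w z) (@open_gt R q)) => qx.
  by have := Fq r I; rewrite /= rx leNgt qx.
rewrite -[X in measurable X]setCK setC_bigcap; apply/measurableC/bigcupT_measurable_rat.
move=> r; apply: measurableC.
have -> : [set w | F (ratr r) w <= q] = setT `&` F (ratr r) @^-1` `]-oo, q].
  by apply/seteqP; split=> w /=; rewrite in_itv /= => //= -[].
exact: mF.
Qed.

Lemma ae_forall_count (mu : {measure set Omega -> \bar R}) (I : countType)
    (Q : I -> Omega -> Prop) :
  (forall i, {ae mu, forall w, Q i w}) -> {ae mu, forall w, forall i, Q i w}.
Proof.
move=> aeQ.
have : {ae mu, forall w, forall n, oapp (Q ^~ w) True (unpickle n)}.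
  by apply: ae_foralln => n; case: (unpickle n) => [i|] /=; [exact: aeQ | exact: aeW].
by apply: filterS => w Qw i; have := Qw (pickle i); rewrite pickleK.
Qed.

Lemma ae_mem_preimage (mu : {finite_measure set Omega -> \bar R})
    (T : Omega -> Omega) (A : set Omega) :
  measurable_fun setT T -> measurable A -> mu (T @^-1` A) = mu A ->
  T @^-1` A `<=` A -> {ae mu, forall w, A w -> A (T w)}.
Proof.
move=> mT mA muTA TAA.
have mTA : measurable (T @^-1` A) by rewrite -[X in measurable X]setTI; exact: mT.
exists (A `\` T @^-1` A); split; first exact: measurableD.
  rewrite measureD //; last by rewrite ltey_eq fin_num_measure.
  (* [measureD] reaches [mu] through its content structure: refold to match [muTA]. *)
  rewrite (setIidr TAA) -[LHS]/(mu A - mu (T @^-1` A))%E muTA.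
  by rewrite subee ?fin_num_measure.
by move=> w /= /not_implyP.
Qed.

Lemma ae_full_set (P : probability Omega R) (Q : Omega -> Prop) :
  {ae P, forall w, Q w} ->
  exists Omega1, measurable Omega1 /\ P Omega1 = 1%E /\ forall w, Omega1 w -> Q w.
Proof.
move=> [N [mN PN0 QN]]; exists (~` N); split; first exact: measurableC.
split; first by rewrite probability_setC // PN0 sube0.
by move=> w Nw; apply: contrapT => nQw; exact/Nw/QN.
Qed.

End almost_sure.

Section shift_invariance.
Context d (Omega : measurableType d) (R : realType) (P : probability Omega R).
Variables (tau : R -> Omega -> Omega) (f g : R -> Omega -> R).
Hypothesis g_eq_f : forall z w, z <= -1 -> g z w = f z w.
Hypothesis g_shift : forall y c w, g (y + c) w = g y (tau c w).

Lemma g_shiftE y c w : y - c <= -1 -> g y w = f (y - c) (tau c w).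
Proof. by move=> ?; rewrite -g_eq_f // -g_shift subrK. Qed.

Lemma has_modulus_shift w0 :
  (forall w, has_modulus w0 (f ^~ w)) -> forall w, has_modulus w0 (g ^~ w).
Proof.
move=> fw0 w x y; set c := Num.max x y + 1.
have [xm ym] : x <= Num.max x y /\ y <= Num.max x y by rewrite !le_max !lexx orbT.
rewrite (@g_shiftE x c) ?(@g_shiftE y c) ?/c; [|lra|lra].
by have := fw0 (tau c w) (x - c) (y - c); rewrite opprB addrA subrK.
Qed.

Hypothesis tau_meas : forall c, measurable_fun setT (tau c).
Hypothesis tau_pres : forall c A, measurable A -> P (tau c @^-1` A) = P A.
Hypothesis f_meas : forall z, measurable_fun setT (f z).
Hypothesis f_cont : forall w, continuous (f ^~ w).

Let left_le (q : R) := [set w | forall z, z <= -1 -> f z w <= q].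

Let measurable_left_le q : measurable (left_le q).
Proof.
have -> : left_le q = [set w | forall z : R, f (-1 - `|z|) w <= q].
  apply/seteqP; split=> w /= fq z; first by apply: fq; have := normr_ge0 z; lra.
  move=> z1; have -> : z = -1 - `|-1 - z| by rewrite ger0_norm; lra.
  exact: fq.
apply: measurable_forall_le => // w z.
have cz : {for z, continuous (fun z : R => -1 - `|z|)}.
  by apply: cvgB; [exact: cvg_cst | exact: norm_continuous].
exact: (continuous_comp cz (@f_cont w _)).
Qed.

Let preimage_left_le q (n : nat) : tau n%:R @^-1` left_le q `<=` left_le q.
Proof.
move=> w /= fq z z1; have zn : z - n%:R <= -1 by have := ler0n R n; lra.
by rewrite -g_eq_f // (g_shiftE _ zn); apply: fq.
Qed.

Lemma ae_shift_le :
  {ae P, forall w (s : \bar R),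
     (forall z, ((f z w)%:E <= s)%E) -> forall y, ((g y w)%:E <= s)%E}.
Proof.
have : {ae P, forall w (q : rat) (n : nat),
         left_le (ratr q) w -> left_le (ratr q) (tau n%:R w)}.
  apply: ae_forall_count => q; apply: ae_foralln => n.
  by apply: ae_mem_preimage => //; exact: tau_pres.
apply: filterS => w recur s fs y; apply: lee_rat_ub => q sq.
have fq : left_le (ratr q) w.
  by move=> z _; have := le_lt_trans (fs z) sq; rewrite lte_fin => /ltW.
set n := (Num.truncn (y + 1)).+1.
have yn : y - n%:R <= -1.
  by have := archimedean.Num.Theory.truncnS_gt (y + 1); rewrite -/n; lra.
by rewrite (g_shiftE _ yn); apply: (recur q n fq).
Qed.

End shift_invariance.

Section weak_field_localized.
Context d (Omega : measurableType d) (R : realType) (P : probability Omega R).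
Variables (H HL HR : R -> R -> Omega -> R) (tau : R -> Omega -> Omega).
Variables (phi w0 : R -> R).
Hypothesis phi_mono : forall x y, x <= y -> phi y <= phi x.
Hypothesis phiL : forall x, x <= -1 -> phi x = 1.
Hypothesis phiR : forall x, 1 <= x -> phi x = 0.
Hypothesis H_mix : forall p y w, H p y w = phi y * HL p y w + (1 - phi y) * HR p y w.
Hypothesis HL_shift : forall p y z w, HL p (y + z) w = HL p y (tau z w).
Hypothesis HR_shift : forall p y z w, HR p (y + z) w = HR p y (tau z w).
Hypothesis H_min : forall p y w, H 0 y w <= H p y w.
Hypothesis w0_mod : modulus w0.
Hypothesis H_mod : forall w, has_modulus w0 (H 0 ^~ w).

Let effH w := effA (fun p y => H p y w).
Let effHL w := effA (fun p y => HL p y w).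
Let effHR w := effA (fun p y => HR p y w).

Lemma phi_bounds y : 0 <= phi y <= 1.
Proof.
apply/andP; split.
  have [/phiR -> //|/ltW y1] := leP 1 y.
  by rewrite -(phiR (lexx 1)) phi_mono.
have [/phiL -> //|/ltW y1] := leP y (-1).
by rewrite -(phiL (lexx (-1))) phi_mono.
Qed.

Lemma HL_far p z w : z <= -1 -> HL p z w = H p z w.
Proof. by move=> z1; rewrite H_mix phiL // subrr mul0r addr0 mul1r. Qed.

Lemma HR_far p z w : 1 <= z -> HR p z w = H p z w.
Proof. by move=> z1; rewrite H_mix phiR // subr0 mul0r add0r mul1r. Qed.

Lemma HL_at p y w : HL p y w = H p (-1) (tau (1 + y) w).
Proof. by rewrite -{1}(addKr 1 y) HL_shift HL_far. Qed.

Lemma HR_at p y w : HR p y w = H p 1 (tau (-1 + y) w).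
Proof. by rewrite -{1}(addNKr 1 y) HR_shift HR_far. Qed.

Let H_cont w : continuous (H 0 ^~ w).
Proof. exact: has_modulus_continuous w0_mod (H_mod w). Qed.

Let HR_opp_far z w : z <= -1 -> HR 0 (- z) w = H 0 (- z) w.
Proof. by move=> z1; rewrite HR_far // lerNr. Qed.

Let HR_opp_shift y c w : HR 0 (- (y + c)) w = HR 0 (- y) (tau (- c) w).
Proof. by rewrite opprD HR_shift. Qed.

Let H_opp_mod w : has_modulus w0 (fun z => H 0 (- z) w).
Proof. exact: has_modulus_opp (H_mod w). Qed.

Lemma effH_sup w : effH w = ereal_sup (range (fun y => (H 0 y w)%:E)).
Proof. exact: effA_sup. Qed.

Lemma effHL_sup w : effHL w = ereal_sup (range (fun y => (HL 0 y w)%:E)).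
Proof.
apply: effA_sup => [p y|]; first by rewrite !HL_at.
exact: has_modulus_continuous w0_mod (has_modulus_shift (HL_far 0) (HL_shift 0) H_mod w).
Qed.

Lemma effHR_sup w : effHR w = ereal_sup (range (fun y => (HR 0 y w)%:E)).
Proof.
apply: effA_sup => [p y|]; first by rewrite !HR_at.
have := has_modulus_opp (has_modulus_shift HR_opp_far HR_opp_shift H_opp_mod w).
by under eq_fun do rewrite opprK; exact: has_modulus_continuous.
Qed.

Lemma effH_le_max w : (effH w <= Order.max (effHL w) (effHR w))%E.
Proof.
rewrite effH_sup effHL_sup effHR_sup; apply: ge_ereal_sup => _ [y _ <-].
apply: le_trans (_ : Order.max (HL 0 y w)%:E (HR 0 y w)%:E <= _)%E.
  by rewrite -EFin_max lee_fin H_mix; exact: mix_le_max (phi_bounds y).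
by apply: le_max2; apply: ereal_sup_ubound; exists y.
Qed.

Hypothesis tau_meas : forall c, measurable_fun setT (tau c).
Hypothesis tau_pres : forall c A, measurable A -> P (tau c @^-1` A) = P A.
Hypothesis H_meas : forall y, measurable_fun setT (H 0 y).

Lemma ae_effHL_le : {ae P, forall w, (effHL w <= effH w)%E}.
Proof.
have := ae_shift_le (HL_far 0) (HL_shift 0) tau_meas tau_pres H_meas H_cont.
apply: filterS => w le_ub; rewrite effHL_sup effH_sup.
by apply: ge_ereal_sup => _ [y _ <-]; apply: le_ub => z; apply: ereal_sup_ubound; exists z.
Qed.

Lemma ae_effHR_le : {ae P, forall w, (effHR w <= effH w)%E}.
Proof.
have H_opp_cont w : continuous (fun z => H 0 (- z) w).
  exact: has_modulus_continuous w0_mod (H_opp_mod w).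
have := ae_shift_le HR_opp_far HR_opp_shift (fun c => tau_meas (- c))
  (fun c => tau_pres (- c)) (fun z => H_meas (- z)) H_opp_cont.
apply: filterS => w le_ub; rewrite effHR_sup effH_sup.
apply: ge_ereal_sup => _ [y _ <-]; rewrite -(opprK y).
by apply: le_ub => z; apply: ereal_sup_ubound; exists (- z).
Qed.

Lemma ae_effH_max : {ae P, forall w, effH w = Order.max (effHL w) (effHR w)}.
Proof.
apply: filterS2 ae_effHL_le ae_effHR_le => w HLw HRw.
by apply/eqP; rewrite eq_le effH_le_max ge_max HLw HRw.
Qed.

End weak_field_localized.

Theorem theorem4p11 (d : measure_display) (Omega : measurableType d)
  (R : realType) (P : probability Omega R)
  (H HL HR : R -> R -> Omega -> R) (tau : R -> Omega -> Omega)
  (phi : R -> R) (muL muR : \bar R) :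
  (* H measurable *)
  measurable_fun setT (fun x : R * R * Omega => H x.1.1 x.1.2 x.2) ->
  ergodic_group P tau ->
  (* (H1) *)
  (exists L : R, forall p q y w, `|H p y w - H q y w| <= L * `|p - q|) ->
  (* (H2) *)
  (exists c0 C0 g : R, 0 < c0 /\ 0 < C0 /\ 0 < g /\
     forall p y w, - c0 * `|p + g| <= H p y w /\ H p y w <= C0 * `|p + g|) ->
  (* (H3) *)
  (forall M : R, exists K : R, forall p, K <= `|p| -> forall y w, M <= H p y w) ->
  (* (H4) *)
  (exists w0 : R -> R, modulus w0 /\
     forall p x y w, `|H p y w - H p x w| <= w0 (`|x - y| * (1 + `|p|))) ->
  (* (H5) *)
  (forall y w p q t, 0 <= t -> t <= 1 ->
     H (t * p + (1 - t) * q) y w <= t * H p y w + (1 - t) * H q y w) ->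
  (* (H6) *)
  (forall p y w, H 0 y w <= H p y w) ->
  (* (H7-WFL) *)
  smooth phi ->
  (forall x y, x <= y -> phi y <= phi x) ->
  (forall x, x <= -1 -> phi x = 1) ->
  (forall x, 1 <= x -> phi x = 0) ->
  (forall p y w, H p y w = phi y * HL p y w + (1 - phi y) * HR p y w) ->
  (* (H8) *)
  (forall p y z w, HL p (y + z) w = HL p y (tau z w)) ->
  (forall p y z w, HR p (y + z) w = HR p y (tau z w)) ->
  (* (H9) *)
  (forall U V : set R, measurable U -> measurable V ->
     (forall x y, U x -> V y -> 1 <= `|x - y|) ->
     independent_sigma P (sigmaH H U) (sigmaH H V)) ->
  (* mu*_L, mu*_R : the almost surely constant values *)
  {ae P, forall w, effA (fun p y => HL p y w) = muL} ->
  {ae P, forall w, effA (fun p y => HR p y w) = muR} ->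
  exists Omega1 : set Omega, measurable Omega1 /\ P Omega1 = 1%E /\
    forall w, Omega1 w -> effA (fun p y => H p y w) = Order.max muL muR.
Proof.
move=> mH [_ [_ [tau_meas [tau_pres _]]]] _ _ _ [w0 [w0_mod H_ymod]] _ H_min _
  phi_mono phiL phiR H_mix HL_shift HR_shift _ aeL aeR.
have H_mod w : has_modulus w0 (H 0 ^~ w).
  by move=> x y; have := H_ymod 0 y x w; rewrite normr0 addr0 mulr1 (distrC y).
have H_meas y : measurable_fun setT (H 0 y) := measurable_fun_pair2 ((0 : R), y) mH.
have ae_max := ae_effH_max phi_mono phiL phiR H_mix HL_shift HR_shift H_min
  w0_mod H_mod tau_meas tau_pres H_meas.
apply: ae_full_set.
by apply: filterS3 aeL aeR ae_max => w -> ->.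
Qed.
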